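(* Let $(\mathfrak g,\{\cdot,\cdot\},E)$ be a pre-ENL algebra and let $L:\mathfrak g\to\mathfrak{gl}(\mathfrak g)$, $L(x)y=\{x,y\}$. Let $\{e_1,\dots,e_n\}$ be a basis of $\mathfrak g$ with dual basis $\{e_1^*,\dots,e_n^*\}$, and set $r:=\sum_{i=1}^n(e_i\otimes e_i^*-e_i^*\otimes e_i)\in(\mathfrak g\ltimes_{L^*}\mathfrak g^* )\otimes(\mathfrak g\ltimes_{L^*}\mathfrak g^* )$. Then $r$ is an EN $r$-matrix in the semidirect product ENL algebra $(\mathfrak g\ltimes_{L^*}\mathfrak g^*,E+E^* )$, i.e. $[\![r,r]\!]=0$ and $((E+E^* )\otimes\mathrm{Id}-\mathrm{Id}\otimes(E+E^* ))(r)=0$.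
   Context: All vector spaces are finite-dimensional over an algebraically closed field of characteristic zero. A pre-Lie algebra $(\mathfrak g,\{\cdot,\cdot\})$ is a vector space with bilinear product satisfying $\{\{x,y\},z\}-\{x,\{y,z\}\}=\{\{y,x\},z\}-\{y,\{x,z\}\}$; its induced (sub-adjacent) Lie bracket is $[x,y]_{\mathfrak g}=\{x,y\}-\{y,x\}$, and $L$ is a representation of this Lie algebra. A pre-ENL algebra $(\mathfrak g,\{\cdot,\cdot\},E)$ is a pre-Lie algebra with linear $E$ such that $E\{x,y\}=\{Ex,y\}=\{x,Ey\}$ for all $x,y$. The dual representation is $\langle L^*(x)\xi,y\rangle=-\langle\xi,L(x)y\rangle$, and $\mathfrak g\ltimes_{L^*}\mathfrak g^*$ is $\mathfrak g\oplus\mathfrak g^*$ with bracket $[x+\xi,y+\eta]=[x,y]_{\mathfrak g}+L^*(x)\eta-L^*(y)\xi$ and operator $(E+E^* )(x+\xi)=Ex+E^*\xi$, where $E^*$ is the dual map. For $r=\sum a_i\otimes b_i$, $[\![r,r]\!]=[r_{12},r_{13}]+[r_{13},r_{23}]+[r_{12},r_{23}]$ in the tensor cube of the universal enveloping algebra of $\mathfrak g\ltimes_{L^*}\mathfrak g^*$. *)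

(* g = F^n as row vectors 'rV[F]_n; g^* = F^n via the standard
   pairing; the semidirect product g ⋉ g^* = 'rV[F]_(n+n) via row_mx. *)
From HB Require Import structures.
From mathcomp Require Import all_boot all_order all_algebra.
Set Implicit Arguments. Unset Strict Implicit. Unset Printing Implicit Defensive.
Import GRing.Theory.
Local Open Scope ring_scope.

Section Defs.
Variable F : fieldType.
Variable n : nat.

Definition pair (xi y : 'rV[F]_n) : F := \sum_(j < n) xi 0 j * y 0 j.

Definition stdv (m : nat) (j : 'I_m) : 'rV[F]_m := delta_mx 0 j.

Definition bilinear_prod (p : 'rV[F]_n -> 'rV[F]_n -> 'rV[F]_n) : Prop :=
  (forall (a : F) x y z, p (a *: x + y) z = a *: p x z + p y z) /\
  (forall (a : F) x y z, p z (a *: x + y) = a *: p z x + p z y).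

Definition preLie (p : 'rV[F]_n -> 'rV[F]_n -> 'rV[F]_n) : Prop :=
  bilinear_prod p /\
  forall x y z, p (p x y) z - p x (p y z) = p (p y x) z - p y (p x z).

Definition preENL (p : 'rV[F]_n -> 'rV[F]_n -> 'rV[F]_n)
  (E : {linear 'rV[F]_n -> 'rV[F]_n}) : Prop :=
  preLie p /\ forall x y, E (p x y) = p (E x) y /\ E (p x y) = p x (E y).

Definition subadj (p : 'rV[F]_n -> 'rV[F]_n -> 'rV[F]_n) x y := p x y - p y x.

(* dual representation: <L^*(x) xi, y> = - <xi, L(x) y>, L(x) y = {x,y} *)
Definition Ldual (p : 'rV[F]_n -> 'rV[F]_n -> 'rV[F]_n) (x xi : 'rV[F]_n)
  : 'rV[F]_n := \row_j (- pair xi (p x (stdv j))).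

(* dual map: <E^* xi, y> = <xi, E y> *)
Definition Edual (E : 'rV[F]_n -> 'rV[F]_n) (xi : 'rV[F]_n) : 'rV[F]_n :=
  \row_j pair xi (E (stdv j)).

Definition D := 'rV[F]_(n + n).
Definition inj1 (x : 'rV[F]_n) : D := row_mx x 0.
Definition inj2 (xi : 'rV[F]_n) : D := row_mx 0 xi.

Definition brD p (u v : D) : D :=
  row_mx (subadj p (lsubmx u) (lsubmx v))
         (Ldual p (lsubmx u) (rsubmx v) - Ldual p (lsubmx v) (rsubmx u)).

Definition EED (E : 'rV[F]_n -> 'rV[F]_n) (u : D) : D :=
  row_mx (E (lsubmx u)) (Edual E (rsubmx u)).

(* 2-tensors in D ⊗ D: coordinates w.r.t. standard basis f_p ⊗ f_q *)
Definition tens2 (a b : D) : 'M[F]_(n + n) := \matrix_(p, q) (a 0 p * b 0 q).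

(* 3-tensors in D ⊗ D ⊗ D as coordinate functions *)
Definition tens3 (a b c : D) (i j k : 'I_(n + n)) : F := a 0 i * b 0 j * c 0 k.

(* [[r,r]] = [r12,r13] + [r13,r23] + [r12,r23] for
   r = sum_{p,q} r_pq f_p ⊗ f_q, in D^{⊗3} ⊂ U(D)^{⊗3} *)
Definition CYB p (r : 'M[F]_(n + n)) (i j k : 'I_(n + n)) : F :=
  \sum_(a < n + n) \sum_(b < n + n) \sum_(c < n + n) \sum_(d < n + n)
    r a b * r c d *
    ( tens3 (brD p (stdv a) (stdv c)) (stdv b) (stdv d) i j k
    + tens3 (stdv a) (stdv c) (brD p (stdv b) (stdv d)) i j k
    + tens3 (stdv a) (brD p (stdv b) (stdv c)) (stdv d) i j k ).

Definition tmap2 (f g : D -> D) (r : 'M[F]_(n + n)) : 'M[F]_(n + n) :=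
  \sum_(a < n + n) \sum_(b < n + n) r a b *: tens2 (f (stdv a)) (g (stdv b)).

End Defs.

(* Since e and e^* are dual bases, \sum_i e_i ⊗ e_i^* is the identity of g,
   so in the coordinates of g ⊕ g^* the tensor r is the skew pairing
   J = [[0, 1], [-1, 0]], whatever the basis.  The EN condition becomes
   B^T J = J B for the block-diagonal matrix B = diag(E, E^T) of E + E^*,
   which holds for every E.  Contracting [[r, r]] against J leaves in each of
   the eight index sectors a combination of the structure constants of the
   product that cancels because the bracket of g ⋉ g^* restricted to g is the
   sub-adjacent bracket {x, y} - {y, x}, i.e. id is an O-operator for L. *)

From HB Require Import structures.
From mathcomp Require Import all_boot all_order all_algebra ring.
Import GRing.Theory.
Set Implicit Arguments. Unset Strict Implicit. Unset Printing Implicit Defensive.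
Local Open Scope ring_scope.

Lemma sum_block_mx (V : nmodType) (I : Type) (r : seq I) (P : pred I)
    m1 m2 n1 n2 (A : I -> 'M[V]_(m1, n1)) (B : I -> 'M[V]_(m1, n2))
    (C : I -> 'M[V]_(m2, n1)) (D : I -> 'M[V]_(m2, n2)) :
  \sum_(i <- r | P i) block_mx (A i) (B i) (C i) (D i)
  = block_mx (\sum_(i <- r | P i) A i) (\sum_(i <- r | P i) B i)
             (\sum_(i <- r | P i) C i) (\sum_(i <- r | P i) D i).
Proof.
elim: r => [|i r IHr]; first by rewrite !big_nil block_mx0.
by rewrite !big_cons; case: (P i); rewrite IHr ?add_block_mx.
Qed.

Lemma lin1_mx_id (R : pzRingType) m : lin1_mx id = 1%:M :> 'M[R]_m.
Proof. by apply/matrixP => i j; rewrite !mxE eqxx eq_sym. Qed.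

Lemma sum_delta_mull (R : pzRingType) m (a : 'I_m) (G : 'I_m -> R) :
  \sum_b (a == b)%:R * G b = G a.
Proof.
rewrite (big_only1 a) ?eqxx ?mul1r // => b.
by rewrite eq_sym => /negbTE-> _; rewrite mul0r.
Qed.

Section Coordinates.
Variables (F : fieldType) (n : nat).
Implicit Types x y w : 'rV[F]_n.

Lemma stdvE m (b j : 'I_m) : stdv F b 0 j = (b == j)%:R.
Proof. by rewrite mxE eqxx eq_sym. Qed.

Lemma stdvxx m (j : 'I_m) : stdv F j 0 j = 1.
Proof. by rewrite stdvE eqxx. Qed.

Lemma stdv_neq m (b j : 'I_m) : b != j -> stdv F b 0 j = 0.
Proof. by rewrite stdvE => /negbTE->. Qed.

Lemma pair_stdvl (a : 'I_n) w : pair (stdv F a) w = w 0 a.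
Proof. by rewrite /pair; under eq_bigr do rewrite stdvE; rewrite sum_delta_mull. Qed.

Lemma pair0l w : pair 0 w = 0.
Proof. by rewrite /pair big1 // => j _; rewrite mxE mul0r. Qed.

Lemma stdv_lshift (a : 'I_n) : stdv F (lshift n a) = inj1 (stdv F a).
Proof.
apply/rowP => k; rewrite -(splitK k); case: (split k) => c /=.
  by rewrite row_mxEl !stdvE eq_shift.
by rewrite row_mxEr stdvE eq_shift mxE.
Qed.

Lemma stdv_rshift (a : 'I_n) : stdv F (rshift n a) = inj2 (stdv F a).
Proof.
apply/rowP => k; rewrite -(splitK k); case: (split k) => c /=.
  by rewrite row_mxEl stdvE eq_shift mxE.
by rewrite row_mxEr !stdvE eq_shift.
Qed.

Lemma inj1_lshift x a : inj1 x 0 (lshift n a) = x 0 a.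
Proof. exact: row_mxEl. Qed.

Lemma inj1_rshift x a : inj1 x 0 (rshift n a) = 0.
Proof. by rewrite row_mxEr mxE. Qed.

Lemma inj2_lshift x a : inj2 x 0 (lshift n a) = 0.
Proof. by rewrite row_mxEl mxE. Qed.

Lemma inj2_rshift x a : inj2 x 0 (rshift n a) = x 0 a.
Proof. exact: row_mxEr. Qed.

End Coordinates.
Arguments stdv_neq {F m b j}.

Section CanonicalTensor.
Variables (F : fieldType) (n : nat).

Definition skew_pairing_mx : 'M[F]_(n + n) := block_mx 0 1%:M (- 1%:M) 0.

Lemma tens2_mul (u v : D F n) : tens2 u v = u^T *m v.
Proof. by apply/matrixP => P Q; rewrite !mxE big_ord1 !mxE. Qed.

Lemma tens2_skew_inj (x y : 'rV[F]_n) :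
  tens2 (inj1 x) (inj2 y) - tens2 (inj2 y) (inj1 x)
  = block_mx 0 (x^T *m y) (- (y^T *m x)) 0.
Proof.
rewrite !tens2_mul !tr_row_mx !trmx0 !mul_col_row !(mulmx0, mul0mx).
by rewrite opp_block_mx add_block_mx !(oppr0, addr0, add0r).
Qed.

Variables (e estar : 'I_n -> 'rV[F]_n).
Hypothesis hdual : forall i j, pair (estar i) (e j) = (i == j)%:R.

Lemma dual_basis_sum_mx : \sum_i (e i)^T *m estar i = 1%:M.
Proof.
set Em := \matrix_i e i; set Sm := \matrix_i estar i.
have /mulmx1C <- : Sm *m Em^T = 1%:M.
  apply/matrixP => i j; rewrite !mxE -hdual.
  by apply: eq_bigr => k _; rewrite !mxE.
apply/matrixP => a b; rewrite !mxE summxE.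
by apply: eq_bigr => i _; rewrite !mxE big_ord1 !mxE.
Qed.

Lemma dual_basis_sum_mx_tr : \sum_i (estar i)^T *m e i = 1%:M.
Proof.
rewrite -trmx1 -dual_basis_sum_mx raddf_sum.
by apply: eq_bigr => i _; rewrite /= trmx_mul trmxK.
Qed.

Lemma canonical_tensor_skew_pairing :
  \sum_(i < n) (tens2 (inj1 (e i)) (inj2 (estar i))
                - tens2 (inj2 (estar i)) (inj1 (e i))) = skew_pairing_mx.
Proof.
under eq_bigr do rewrite tens2_skew_inj.
by rewrite sum_block_mx sumrN dual_basis_sum_mx dual_basis_sum_mx_tr !big1_eq.
Qed.

End CanonicalTensor.
Arguments skew_pairing_mx {F n}.

Section ENCondition.
Variables (F : fieldType) (n : nat).

Lemma tmap2_mx (f g : D F n -> D F n) M :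
  tmap2 f g M = (lin1_mx f)^T *m M *m lin1_mx g.
Proof.
apply/matrixP => P Q; rewrite summxE !mxE.
under [RHS]eq_bigr do rewrite mxE big_distrl.
rewrite exchange_big; apply: eq_bigr => a _; rewrite summxE.
by apply: eq_bigr => b _; rewrite !mxE /= mulrA [_ * M a b]mulrC.
Qed.

Lemma tr_block_diag_skew_pairing (A : 'M[F]_n) :
  (block_mx A 0 0 A^T)^T *m skew_pairing_mx
  = skew_pairing_mx *m block_mx A 0 0 A^T.
Proof.
rewrite tr_block_mx trmxK !trmx0 !mulmx_block.
by rewrite !(mulmx0, mul0mx, mulmx1, mul1mx, mulNmx, mulmxN, addr0, add0r).
Qed.

Variable E : {linear 'rV[F]_n -> 'rV[F]_n}.

Lemma lin1_mx_Edual : lin1_mx (Edual E) = (lin1_mx E)^T.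
Proof. by apply/matrixP => i j; rewrite !mxE pair_stdvl. Qed.

Lemma EED_inj1 x : EED E (inj1 x) = inj1 (E x).
Proof.
rewrite /EED row_mxKl row_mxKr; congr row_mx.
by apply/rowP => j; rewrite !mxE pair0l.
Qed.

Lemma EED_inj2 xi : EED E (inj2 xi) = inj2 (Edual E xi).
Proof. by rewrite /EED row_mxKl row_mxKr linear0. Qed.

Lemma lin1_mx_EED : lin1_mx (EED E) = block_mx (lin1_mx E) 0 0 (lin1_mx E)^T.
Proof.
rewrite -lin1_mx_Edual; apply/matrixP => P Q.
rewrite -(splitK P) -(splitK Q); case: (split P) => a; case: (split Q) => b /=;
by rewrite [LHS]mxE -[delta_mx 0 _]/(stdv F _) ?(stdv_lshift, stdv_rshift)
  ?(EED_inj1, EED_inj2) ?(inj1_lshift, inj1_rshift, inj2_lshift, inj2_rshift)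
  ?(block_mxEul, block_mxEur, block_mxEdl, block_mxEdr) ?mxE.
Qed.

Lemma EN_skew_pairing :
  tmap2 (EED E) id skew_pairing_mx - tmap2 id (EED E) skew_pairing_mx = 0.
Proof.
rewrite !tmap2_mx lin1_mx_id trmx1 mulmx1 mul1mx lin1_mx_EED.
by rewrite tr_block_diag_skew_pairing subrr.
Qed.

End ENCondition.

Section SkewPairingSums.
Variables (F : fieldType) (n : nat).
Local Notation J := (@skew_pairing_mx F n).

Lemma sum_skew_pairing_row_lshift a (G : 'I_(n + n) -> F) :
  \sum_b J (lshift n a) b * G b = G (rshift n a).
Proof.
rewrite big_split_ord /= big1 ?add0r => [|b _]; last first.
  by rewrite block_mxEul mxE mul0r.
by under eq_bigr do rewrite block_mxEur mxE; rewrite sum_delta_mull.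
Qed.

Lemma sum_skew_pairing_row_rshift a (G : 'I_(n + n) -> F) :
  \sum_b J (rshift n a) b * G b = - G (lshift n a).
Proof.
rewrite big_split_ord /= [X in _ + X]big1 ?addr0 => [|b _]; last first.
  by rewrite block_mxEdr mxE mul0r.
by under eq_bigr do rewrite block_mxEdl !mxE mulNr; rewrite sumrN sum_delta_mull.
Qed.

Lemma sum_skew_pairing_col_lshift a (G : 'I_(n + n) -> F) :
  \sum_b J b (lshift n a) * G b = - G (rshift n a).
Proof.
rewrite big_split_ord /= big1 ?add0r => [|b _]; last first.
  by rewrite block_mxEul mxE mul0r.
under eq_bigr do rewrite block_mxEdl !mxE mulNr eq_sym.
by rewrite sumrN sum_delta_mull.
Qed.

Lemma sum_skew_pairing_col_rshift a (G : 'I_(n + n) -> F) :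
  \sum_b J b (rshift n a) * G b = G (lshift n a).
Proof.
rewrite big_split_ord /= [X in _ + X]big1 ?addr0 => [|b _]; last first.
  by rewrite block_mxEdr mxE mul0r.
by under eq_bigr do rewrite block_mxEur mxE eq_sym; rewrite sum_delta_mull.
Qed.

End SkewPairingSums.

Section ClassicalYangBaxter.
Variables (F : fieldType) (n : nat) (p : 'rV[F]_n -> 'rV[F]_n -> 'rV[F]_n).
Implicit Types x y xi eta : 'rV[F]_n.

Lemma CYB_contract (M : 'M[F]_(n + n)) i j k : CYB p M i j k =
    \sum_a M a j * \sum_c M c k * brD p (stdv F a) (stdv F c) 0 i
  + \sum_b M i b * \sum_d M j d * brD p (stdv F b) (stdv F d) 0 k
  + \sum_b M i b * \sum_c M c k * brD p (stdv F b) (stdv F c) 0 j.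
Proof.
rewrite /CYB /tens3.
under eq_bigr => a _ do under eq_bigr => b _ do under eq_bigr => c _ do
  under eq_bigr => d _ do rewrite !mulrDr.
under eq_bigr => a _ do under eq_bigr => b _ do under eq_bigr => c _ do
  rewrite !big_split.
under eq_bigr => a _ do under eq_bigr => b _ do rewrite !big_split.
under eq_bigr => a _ do rewrite !big_split.
rewrite !big_split /=; congr (_ + _ + _).
- apply: eq_bigr => a _; rewrite (big_only1 j) // => [|b nbj _].
    rewrite mulr_sumr; apply: eq_bigr => c _; rewrite (big_only1 k) // => [|d ndk _].
      by rewrite !stdvxx; ring.
    by rewrite (stdv_neq ndk) !(mulr0, mul0r).
  apply: big1 => c _; apply: big1 => d _.
  by rewrite (stdv_neq nbj) !(mulr0, mul0r).
- rewrite (big_only1 i) // => [|a nai _].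
    apply: eq_bigr => b _; rewrite (big_only1 j) // => [|c ncj _].
      by rewrite mulr_sumr; apply: eq_bigr => d _; rewrite !stdvxx; ring.
    apply: big1 => d _.
    by rewrite (stdv_neq ncj) !(mulr0, mul0r).
  apply: big1 => b _; apply: big1 => c _; apply: big1 => d _.
  by rewrite (stdv_neq nai) !(mulr0, mul0r).
- rewrite (big_only1 i) // => [|a nai _].
    apply: eq_bigr => b _; rewrite mulr_sumr; apply: eq_bigr => c _.
    rewrite (big_only1 k) // => [|d ndk _].
      by rewrite !stdvxx; ring.
    by rewrite (stdv_neq ndk) !(mulr0, mul0r).
  apply: big1 => b _; apply: big1 => c _; apply: big1 => d _.
  by rewrite (stdv_neq nai) !(mulr0, mul0r).
Qed.

Hypothesis hp : bilinear_prod p.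

Lemma prod0l y : p 0 y = 0.
Proof.
have := (proj1 hp) 1 0 0 y; rewrite scaler0 add0r scale1r => h.
by apply: (addrI (p 0 y)); rewrite addr0 -h.
Qed.

Lemma prod0r x : p x 0 = 0.
Proof.
have := (proj2 hp) 1 0 0 x; rewrite scaler0 add0r scale1r => h.
by apply: (addrI (p x 0)); rewrite addr0 -h.
Qed.

Lemma Ldual0l xi : Ldual p 0 xi = 0.
Proof.
apply/rowP => j; rewrite !mxE prod0l /pair big1 ?oppr0 // => k _.
by rewrite mxE mulr0.
Qed.

Lemma Ldual0r x : Ldual p x 0 = 0.
Proof. by apply/rowP => j; rewrite !mxE pair0l oppr0. Qed.

Lemma brD_inj1_inj1 x y : brD p (inj1 x) (inj1 y) = inj1 (subadj p x y).
Proof. by rewrite /brD !row_mxKl !row_mxKr !Ldual0r subrr. Qed.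

Lemma brD_inj1_inj2 x xi : brD p (inj1 x) (inj2 xi) = inj2 (Ldual p x xi).
Proof.
by rewrite /brD !row_mxKl !row_mxKr Ldual0r /subadj prod0r prod0l subrr subr0.
Qed.

Lemma brD_inj2_inj1 xi y : brD p (inj2 xi) (inj1 y) = inj2 (- Ldual p y xi).
Proof.
by rewrite /brD !row_mxKl !row_mxKr Ldual0r /subadj prod0r prod0l subrr sub0r.
Qed.

Lemma brD_inj2_inj2 xi eta : brD p (inj2 xi) (inj2 eta) = 0.
Proof. by rewrite /brD !row_mxKl !row_mxKr !Ldual0l /subadj prod0r subrr row_mx0. Qed.

Lemma CYB_skew_pairing i j k : CYB p skew_pairing_mx i j k = 0.
Proof.
rewrite CYB_contract -(splitK i) -(splitK j) -(splitK k).
case: (split i) => a; case: (split j) => b; case: (split k) => c /=;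
rewrite ?(sum_skew_pairing_row_lshift, sum_skew_pairing_row_rshift,
          sum_skew_pairing_col_lshift, sum_skew_pairing_col_rshift);
rewrite !(stdv_lshift, stdv_rshift, brD_inj1_inj1, brD_inj1_inj2,
          brD_inj2_inj1, brD_inj2_inj2);
rewrite ?(inj1_lshift, inj1_rshift, inj2_lshift, inj2_rshift) ?mxE ?pair_stdvl.
all: ring.
Qed.

End ClassicalYangBaxter.

Theorem theorem7p8 (F : closedFieldType) (hchar : [pchar F] =i pred0) (n : nat)
  (p : 'rV[F]_n -> 'rV[F]_n -> 'rV[F]_n) (E : {linear 'rV[F]_n -> 'rV[F]_n})
  (hENL : preENL p E)
  (e estar : 'I_n -> 'rV[F]_n)
  (hbasis : row_free (\matrix_(i < n) e i))
  (hdual : forall i j, pair (estar i) (e j) = (i == j)%:R) :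
  let r := \sum_(i < n) (tens2 (inj1 (e i)) (inj2 (estar i))
                         - tens2 (inj2 (estar i)) (inj1 (e i))) in
  (forall i j k, CYB p r i j k = 0) /\
  tmap2 (EED E) id r - tmap2 id (EED E) r = 0.
Proof.
have [[hp _] _] := hENL.
rewrite /= (canonical_tensor_skew_pairing hdual); split.
  exact: CYB_skew_pairing.
exact: EN_skew_pairing.
Qed.
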